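(* Let $(\lambda_k),(x_k),(y_k)$ be generated by the acceleration framework (context) up to $K$ for convex differentiable $g$ with minimizer $x^*$, and suppose $\delta\le\frac{\|x^*\|}{\mu A_K}$ with $\mu=\frac{4\sqrt2}{\sqrt{1-\sigma}}$. Then for all $k\in[K]$ and $\theta\in[0,1]$: $\|y_k-x^*\|\le\mu\|x^*\|$ and $\|(1-\theta)x_k+\theta y_k-x^*\|\le\mu\|x^*\|$.
   Context: Acceleration framework: let $g:\mathbb{R}^d\to\mathbb{R}$ be convex and differentiable, $\sigma\in(0,1)$, $\delta\ge0$, $K\ge1$. Sequences $(\lambda_k)_{k=1}^K\subset(0,\infty)$ and $(x_k)_{k=0}^K,(y_k)_{k=0}^K\subset\mathbb{R}^d$ are generated by the framework if $x_0=y_0=0$, $A_0=0$, and for each $k=0,\dots,K-1$, with $a_{k+1}=\frac12\big[\lambda_{k+1}+\sqrt{\lambda_{k+1}^2+4\lambda_{k+1}A_k}\big]$, $A_{k+1}=A_k+a_{k+1}$, $\tilde x_k=\frac{A_k}{A_{k+1}}y_k+\frac{a_{k+1}}{A_{k+1}}x_k$, one has $\|\lambda_{k+1}\nabla g(y_{k+1})+y_{k+1}-\tilde x_k\|\le\sigma\|y_{k+1}-\tilde x_k\|+\lambda_{k+1}\delta$ and $\|x_{k+1}-(x_k-a_{k+1}\nabla g(y_{k+1}))\|\le a_{k+1}\delta$. (Note $\lambda_{k+1}A_{k+1}=a_{k+1}^2$.) *)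

From Stdlib Require Import Reals.
From mathcomp Require Import ssreflect ssrfun ssrbool eqtype ssrnat fintype bigop.

Open Scope R_scope.

Definition vec (d : nat) := 'I_d -> R.

Definition vadd {d} (u v : vec d) : vec d := fun i => u i + v i.
Definition vsub {d} (u v : vec d) : vec d := fun i => u i - v i.
Definition vscale {d} (c : R) (u : vec d) : vec d := fun i => c * u i.

Definition inner {d} (u v : vec d) : R := \big[Rplus/0]_(i < d) (u i * v i).
Definition norm {d} (u : vec d) : R := sqrt (inner u u).

Definition convex_fun {d} (g : vec d -> R) : Prop :=
  forall (x y : vec d) (t : R), 0 <= t <= 1 ->
    g (vadd (vscale (1 - t) x) (vscale t y)) <= (1 - t) * g x + t * g y.

Definition has_gradient {d} (g : vec d -> R) (x v : vec d) : Prop :=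
  forall eps : R, 0 < eps -> exists del : R, 0 < del /\
    forall h : vec d, norm h < del ->
      Rabs (g (vadd x h) - g x - inner v h) <= eps * norm h.

Definition is_minimizer {d} (g : vec d -> R) (xs : vec d) : Prop :=
  forall x : vec d, g xs <= g x.

Definition next_a (lam Ak : R) : R := (lam + sqrt (lam ^ 2 + 4 * lam * Ak)) / 2.

(* A_k for the stepsizes lam : nat -> R (lam (k+1) = lambda_{k+1}) *)
Fixpoint Aseq (lam : nat -> R) (k : nat) : R :=
  match k with
  | O => 0
  | S k' => Aseq lam k' + next_a (lam (S k')) (Aseq lam k')
  end.

Definition aseq (lam : nat -> R) (k : nat) : R :=
  match k with
  | O => 0
  | S k' => next_a (lam (S k')) (Aseq lam k')
  end.

Definition xtilde {d} (lam : nat -> R) (x y : nat -> vec d) (k : nat) : vec d :=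
  vadd (vscale (Aseq lam k / Aseq lam (S k)) (y k))
       (vscale (aseq lam (S k) / Aseq lam (S k)) (x k)).

Definition generated_by_framework {d} (grad : vec d -> vec d)
    (sigma delta : R) (K : nat) (lam : nat -> R) (x y : nat -> vec d) : Prop :=
  (forall k, (1 <= k <= K)%nat -> 0 < lam k) /\
  x O = (fun _ => 0) /\ y O = (fun _ => 0) /\
  forall k, (k < K)%nat ->
    norm (vsub (vadd (vscale (lam (S k)) (grad (y (S k)))) (y (S k))) (xtilde lam x y k))
      <= sigma * norm (vsub (y (S k)) (xtilde lam x y k)) + lam (S k) * delta /\
    norm (vsub (x (S k)) (vsub (x k) (vscale (aseq lam (S k)) (grad (y (S k))))))
      <= aseq lam (S k) * delta.

From HB Require Import structures.
From Stdlib Require Import Reals Lra Psatz FunctionalExtensionality.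
From mathcomp Require Import ssreflect ssrfun ssrbool eqtype ssrnat fintype bigop.
Open Scope R_scope.

(* Put w = 1 / sqrt (1 - sigma), e = a_{k+1} delta and B_k = |xs| + (w + 1) A_k delta,
   where xs is the minimizer.  The gradient inequality of g at y_{k+1}, towards y_k and
   towards xs, combined with the algebraic identity behind the framework step, gives the
   estimate-sequence descent
     2 A_{k+1} (g y_{k+1} - g xs) + |u_k - xs|^2 + S^2 - T^2
       <= 2 A_k (g y_k - g xs) + |x_k - xs|^2,
   where u_k = x_k - a_{k+1} grad g (y_{k+1}) and S, T are the two lengths of the relative
   error condition scaled by A_{k+1} / a_{k+1}, so that T <= sigma S + e.  As
   (sigma S + e)^2 <= sigma S^2 + w^2 e^2, the inexactness costs at most (w e)^2, and by
   induction 2 A_k (g y_k - g xs) + |x_k - xs|^2 <= B_k^2 <= (2 |xs|)^2 under the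
   assumption on delta.  The same inequality yields S <= w B_{k+1} <= 2 w |xs|, and
   y_{k+1} - xs is a convex combination of y_k - xs and x_k - xs plus y_{k+1} - xtilde_k,
   whose length is S a_{k+1} / A_{k+1}; this keeps |y_k - xs| <= 4 w |xs| <= mu |xs|. *)

(* Rplus and Rmult as monoid laws, so that the bigop lemmas apply to [inner]. *)
Lemma Rplus_assoc_law : associative Rplus.
Proof. by move=> a b c; rewrite Rplus_assoc. Qed.

HB.instance Definition _ :=
  Monoid.isComLaw.Build R 0 Rplus Rplus_assoc_law Rplus_comm Rplus_0_l.
HB.instance Definition _ := Monoid.isMulLaw.Build R 0 Rmult Rmult_0_l Rmult_0_r.
HB.instance Definition _ :=
  Monoid.isAddLaw.Build R Rmult Rplus Rmult_plus_distr_r Rmult_plus_distr_l.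

Lemma discriminant_le p q r : 0 <= r ->
  (forall t, 0 <= p + 2 * t * q + t * t * r) -> q * q <= p * r.
Proof.
move=> r0 nonneg; case: (Rle_lt_or_eq_dec 0 r r0) => [rpos | r0_eq].
- have := nonneg (- q / r).
  have -> : p + 2 * (- q / r) * q + - q / r * (- q / r) * r = (p * r - q * q) / r.
    by field; lra.
  move=> quad; have : 0 <= (p * r - q * q) / r * r by nra.
  have -> : (p * r - q * q) / r * r = p * r - q * q by field; lra.
  lra.
- rewrite -r0_eq; case: (Req_dec q 0) => [-> | q0]; first lra.
  have := nonneg (- (p + 1) / (2 * q)).
  have -> : 2 * (- (p + 1) / (2 * q)) * q = - (p + 1) by field.
  rewrite -r0_eq Rmult_0_r Rplus_0_r; lra.
Qed.

Lemma sqr_le_sqr_inv a b : 0 <= b -> a * a <= b * b -> a <= b.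
Proof. by move=> b0 ab; apply: Rnot_lt_le => ba; nra. Qed.

Lemma div_succ_mul_lt {c n} : 0 < c -> 0 <= n -> c / (n + 1) * n < c.
Proof.
move=> c0 n0; have -> : c / (n + 1) * n = c - c / (n + 1) by field; lra.
have : 0 < c / (n + 1) by apply: Rdiv_lt_0_compat; lra.
lra.
Qed.

(* Since [X / 0 = 0], the case [c = 0] is allowed; this is why the main theorem does not
   need [0 < A_K] (nor its hypothesis [1 <= K]). *)
Lemma mul_le_of_le_div {c r X} : 0 <= c -> 0 <= X -> r <= X / c -> c * r <= X.
Proof.
move=> c0 X0 rX; case: (Rle_lt_or_eq_dec 0 c c0) => [cpos | <-]; last by lra.
have := Rmult_le_compat_l _ _ _ c0 rX.
by have -> : c * (X / c) = X by field; lra.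
Qed.

Lemma one_le_of_sqr_mul_eq1 {sigma w} : 0 <= sigma -> 0 <= w ->
  w * w * (1 - sigma) = 1 -> 1 <= w.
Proof.
move=> s0 w0 hw; apply: Rnot_lt_le => w1.
have : w * w <= w * 1 by apply: Rmult_le_compat_l; lra.
have : 0 <= w * w * sigma by apply: Rmult_le_pos; [exact: Rle_0_sqr | lra].
lra.
Qed.

(* Convexity of the square at S and e / (1 - sigma), with weights sigma and 1 - sigma. *)
Lemma affine_sqr_le sigma w e S : 0 <= sigma -> w * w * (1 - sigma) = 1 ->
  (sigma * S + e) * (sigma * S + e) <= sigma * (S * S) + w * w * (e * e).
Proof.
move=> s0 hw.
have -> : sigma * (S * S) + w * w * (e * e) = (sigma * S + e) * (sigma * S + e)
  + sigma * (w * w) * (((1 - sigma) * S - e) * ((1 - sigma) * S - e))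
  - (w * w * (1 - sigma) - 1) * (sigma * (1 - sigma) * (S * S) - 2 * sigma * S * e - e * e).
  by ring.
rewrite hw Rminus_diag Rmult_0_l Rminus_0_r.
have : 0 <= sigma * (w * w) * (((1 - sigma) * S - e) * ((1 - sigma) * S - e)).
  by apply: Rmult_le_pos; [nra | apply: Rle_0_sqr].
lra.
Qed.

(* One induction step, with P = 2 A_{k+1} (g y_{k+1} - g xs), Q = |u_k - xs|,
   N = |x_{k+1} - xs| and B = B_k in the notation of the header. *)
Lemma descent_step_real {sigma w e B P Q S T N : R} :
  0 <= sigma < 1 -> 0 <= w -> w * w * (1 - sigma) = 1 ->
  0 <= e -> 0 <= B -> 0 <= P -> 0 <= Q -> 0 <= T -> 0 <= N ->
  P + Q * Q + (S * S - T * T) <= B * B -> T <= sigma * S + e -> N <= Q + e ->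
  P + N * N <= (B + (w + 1) * e) * (B + (w + 1) * e) /\ S <= w * (B + (w + 1) * e).
Proof.
move=> hs w0 hw e0 B0 P0 Q0 T0 N0 hPQSR hT hN.
have hTT : T * T <= sigma * (S * S) + w * w * (e * e).
  by have := affine_sqr_le sigma w e S (proj1 hs) hw; nra.
have hC : P + Q * Q + (1 - sigma) * (S * S) <= (B + w * e) * (B + w * e).
  have : 0 <= B * (w * e) by apply: Rmult_le_pos => //; apply: Rmult_le_pos.
  lra.
have hQ : Q <= B + w * e by apply: sqr_le_sqr_inv; nra.
split; first nra.
apply: (Rle_trans _ (w * (B + w * e))); last nra.
apply: sqr_le_sqr_inv; first nra.
have -> : S * S = w * w * ((1 - sigma) * (S * S)) by rewrite -Rmult_assoc hw Rmult_1_l.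
nra.
Qed.

Section Vectors.
Context {d : nat}.
Implicit Types (u v w : vec d) (f : 'I_d -> R).

Lemma big_Ropp f : - (\big[Rplus/0]_(i < d) f i) = \big[Rplus/0]_(i < d) - f i.
Proof. exact: (big_morph Ropp Ropp_plus_distr Ropp_0). Qed.

Lemma inner_sym u v : inner u v = inner v u.
Proof. by apply: eq_bigr => i _; rewrite Rmult_comm. Qed.

Lemma inner_vscaler c u v : inner u (vscale c v) = c * inner u v.
Proof. by rewrite /inner big_distrr; apply: eq_bigr => i _ /=; rewrite /vscale; ring. Qed.

Lemma inner_self_ge0 u : 0 <= inner u u.
Proof. by apply: (big_ind (fun s => 0 <= s)) => [|a b|i _]; nra. Qed.

Lemma norm_ge0 u : 0 <= norm u.
Proof. exact: sqrt_pos. Qed.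

Lemma norm_sqr u : norm u * norm u = inner u u.
Proof. exact/sqrt_sqrt/inner_self_ge0. Qed.

Lemma inner_vadd u v :
  inner (vadd u v) (vadd u v) = inner u u + 2 * inner u v + inner v v.
Proof.
rewrite /inner !big_distrr -!big_split /=.
by apply: eq_bigr => i _; rewrite /vadd; ring.
Qed.

Lemma inner_le_norm u v : inner u v <= norm u * norm v.
Proof.
have CS : inner u v * inner u v <= inner u u * inner v v.
  apply: discriminant_le; first exact: inner_self_ge0.
  move=> t; have := inner_self_ge0 (vadd u (vscale t v)).
  by rewrite inner_vadd !inner_vscaler [inner (vscale _ _) _]inner_sym inner_vscaler; nra.
rewrite -!norm_sqr in CS; apply: sqr_le_sqr_inv; last lra.
exact: Rmult_le_pos (norm_ge0 u) (norm_ge0 v).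
Qed.

Lemma norm_vadd_le u v : norm (vadd u v) <= norm u + norm v.
Proof.
apply: sqr_le_sqr_inv; first by have := norm_ge0 u; have := norm_ge0 v; lra.
rewrite norm_sqr inner_vadd -!norm_sqr; have := inner_le_norm u v; lra.
Qed.

Lemma norm_vscale c u : 0 <= c -> norm (vscale c u) = c * norm u.
Proof.
move=> c0; rewrite /norm inner_vscaler inner_sym inner_vscaler -Rmult_assoc.
by rewrite sqrt_mult ?sqrt_square //; [nra | exact: inner_self_ge0].
Qed.

Lemma norm_vcomb_le a b u v : 0 <= a -> 0 <= b ->
  norm (vadd (vscale a u) (vscale b v)) <= a * norm u + b * norm v.
Proof.
move=> a0 b0; rewrite -(@norm_vscale a u a0) -(@norm_vscale b v b0); exact: norm_vadd_le.
Qed.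

Lemma norm_zero_vsub u : norm (vsub (fun _ => 0) u) = norm u.
Proof. by rewrite /norm /inner; congr sqrt; apply: eq_bigr => i _; rewrite /vsub; ring. Qed.
End Vectors.

Section Convexity.
Context {d : nat} {g : vec d -> R}.
Hypothesis g_convex : convex_fun g.

Lemma convex_secant_le y z t : 0 <= t <= 1 ->
  g (vadd y (vscale t (vsub z y))) <= g y + t * (g z - g y).
Proof.
move=> t01; have -> : vadd y (vscale t (vsub z y)) = vadd (vscale (1 - t) y) (vscale t z).
  by apply: functional_extensionality => i; rewrite /vadd /vscale /vsub; ring.
by have := g_convex y z t t01; lra.
Qed.

Lemma convex_gradient_le {y v} : has_gradient g y v ->
  forall z, g y + inner v (vsub z y) <= g z.
Proof.
move=> grad_v z; set h := vsub z y; have h0 := norm_ge0 h.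
suff slope_eps : forall eps, 0 < eps -> inner v h - eps * norm h <= g z - g y.
  apply: Rle_plus_epsilon => eps eps0.
  have := slope_eps (eps / (norm h + 1)) ltac:(apply: Rdiv_lt_0_compat; lra).
  have := div_succ_mul_lt eps0 h0; lra.
move=> eps eps0; have [del [del0 near]] := grad_v eps eps0.
set t := Rmin 1 (del / (norm h + 1)).
have t0 : 0 < t by apply: Rmin_pos; [lra | apply: Rdiv_lt_0_compat; lra].
have t1 : t <= 1 := Rmin_l _ _.
have th_small : t * norm h < del.
  apply: (Rle_lt_trans _ (del / (norm h + 1) * norm h)); last exact: div_succ_mul_lt.
  by apply: Rmult_le_compat_r => //; exact: Rmin_r.
have := near (vscale t h); rewrite norm_vscale ?inner_vscaler; last lra.
move=> /(_ th_small); rewrite -Rabs_Ropp => /(Rle_trans _ _ _ (Rle_abs _)) lower.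
have := convex_secant_le y z t (conj (Rlt_le _ _ t0) t1).
rewrite -/h => secant.
apply: (Rmult_le_reg_l t) => //; lra.
Qed.
End Convexity.

Lemma estimate_identity {d} (yk xk yp v xs xt : vec d) {A a lam : R} :
  a <> 0 -> A + a <> 0 -> a * a = lam * (A + a) ->
  xt = vadd (vscale (A / (A + a)) yk) (vscale (a / (A + a)) xk) ->
  2 * A * inner v (vsub yk yp) + 2 * a * inner v (vsub xs yp)
  + inner (vsub xk xs) (vsub xk xs)
  - inner (vsub (vsub xk (vscale a v)) xs) (vsub (vsub xk (vscale a v)) xs)
  = (A + a) / a * ((A + a) / a)
    * (inner (vsub yp xt) (vsub yp xt)
       - inner (vsub (vadd (vscale lam v) yp) xt) (vsub (vadd (vscale lam v) yp) xt)).
Proof.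
move=> a0 Aa0 lam_def ->; have -> : lam = a * a / (A + a) by rewrite lam_def; field.
rewrite /Rminus /inner !big_Ropp !big_distrr -!big_split big_distrr /=.
by apply: eq_bigr => i _; rewrite /vsub /vadd /vscale; field.
Qed.

Lemma norm_sub_le_xtilde {d} (yk xk yp xs xt : vec d) {A a : R} : 0 <= A -> 0 < a ->
  xt = vadd (vscale (A / (A + a)) yk) (vscale (a / (A + a)) xk) ->
  norm (vsub yp xs) <= A / (A + a) * norm (vsub yk xs)
    + a / (A + a) * (norm (vsub xk xs) + (A + a) / a * norm (vsub yp xt)).
Proof.
move=> A0 a0 xt_def.
have -> : vsub yp xs = vadd (vadd (vscale (A / (A + a)) (vsub yk xs))
    (vscale (a / (A + a)) (vsub xk xs))) (vsub yp xt).
  by apply: functional_extensionality => i; rewrite xt_def /vadd /vsub /vscale; field; lra.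
apply: Rle_trans (norm_vadd_le _ _) _.
have -> : a / (A + a) * (norm (vsub xk xs) + (A + a) / a * norm (vsub yp xt))
  = a / (A + a) * norm (vsub xk xs) + norm (vsub yp xt) by field; lra.
have c1 : 0 <= A / (A + a) by apply: Rle_mult_inv_pos; lra.
have c2 : 0 <= a / (A + a) by apply: Rle_mult_inv_pos; lra.
have := norm_vcomb_le _ _ (vsub yk xs) (vsub xk xs) c1 c2; lra.
Qed.

Lemma next_a_pos {l A} : 0 < l -> 0 <= A -> 0 < next_a l A.
Proof. by move=> l0 A0; rewrite /next_a; have := sqrt_pos (l ^ 2 + 4 * l * A); lra. Qed.

Lemma next_a_sqr {l A} : 0 <= l -> 0 <= A -> next_a l A * next_a l A = l * (A + next_a l A).
Proof.
move=> l0 A0; rewrite /next_a.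
have := sqrt_sqrt (l ^ 2 + 4 * l * A) ltac:(nra).
move: (sqrt _) => D D_sqr; rewrite /= in D_sqr; nra.
Qed.

Section Stepsizes.
Context {lam : nat -> R} {K : nat}.
Hypothesis lam_pos : forall k, (1 <= k <= K)%nat -> 0 < lam k.

Lemma Aseq_ge0 k : (k <= K)%nat -> 0 <= Aseq lam k.
Proof.
elim: k => [|k IHk] kK /=; first lra.
have A0 := IHk (ltnW kK); have := next_a_pos (lam_pos k.+1 kK) A0; lra.
Qed.

Lemma aseq_pos k : (k < K)%nat -> 0 < aseq lam k.+1.
Proof. by move=> kK; apply: next_a_pos; [exact: lam_pos | exact/Aseq_ge0/ltnW]. Qed.

Lemma aseq_sqr k : (k < K)%nat ->
  aseq lam k.+1 * aseq lam k.+1 = lam k.+1 * Aseq lam k.+1.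
Proof.
by move=> kK; apply: next_a_sqr; [exact/Rlt_le/lam_pos | exact/Aseq_ge0/ltnW].
Qed.

Lemma Aseq_le k : (k <= K)%nat -> Aseq lam k <= Aseq lam K.
Proof.
have Aseq_le_add n : (k + n <= K)%nat -> Aseq lam k <= Aseq lam (k + n).
  elim: n => [|n IHn] knK; first by rewrite addn0; lra.
  rewrite addnS in knK *; have := aseq_pos _ knK; have := IHn (ltnW knK).
  rewrite /=; lra.
by move=> kK; have := Aseq_le_add (K - k)%nat; rewrite subnKC //; apply.
Qed.
End Stepsizes.

Section Framework.
Context {d : nat} {g : vec d -> R} {grad : vec d -> vec d} {sigma delta w : R}
  {K : nat} {lam : nat -> R} {x y : nat -> vec d} {xs : vec d}.
Hypotheses (g_convex : convex_fun g) (g_grad : forall z, has_gradient g z (grad z))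
  (sigma01 : 0 < sigma < 1) (delta_ge0 : 0 <= delta)
  (w_ge0 : 0 <= w) (w_sqr : w * w * (1 - sigma) = 1)
  (framework : generated_by_framework grad sigma delta K lam x y)
  (xs_min : is_minimizer g xs)
  (delta_budget : (w + 1) * Aseq lam K * delta <= norm xs).

Let lam_pos : forall k, (1 <= k <= K)%nat -> 0 < lam k := proj1 framework.
Let w_ge1 : 1 <= w := one_le_of_sqr_mul_eq1 (Rlt_le _ _ (proj1 sigma01)) w_ge0 w_sqr.

Let a j := aseq lam j.+1.
(* [t j ^ 2 = A_{j+1} / lam_{j+1}] is the factor in front of the squares in the estimate
   identity. *)
Let t j := Aseq lam j.+1 / a j.
Let xt j := xtilde lam x y j.
Let v j := grad (y j.+1).
Let u j := vsub (x j) (vscale (a j) (v j)).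
Let S j := t j * norm (vsub (y j.+1) (xt j)).
Let T j := t j * norm (vsub (vadd (vscale (lam j.+1) (v j)) (y j.+1)) (xt j)).
Let gap j := 2 * (Aseq lam j * (g (y j) - g xs)).
Let dx j := norm (vsub (x j) xs).
Let dy j := norm (vsub (y j) xs).
Let bound j := norm xs + (w + 1) * Aseq lam j * delta.

Let invariant j := gap j + dx j * dx j <= bound j * bound j /\ dy j <= 4 * w * norm xs.

Lemma framework_descent j : (j < K)%nat ->
  gap j.+1 + norm (vsub (u j) xs) * norm (vsub (u j) xs) + (S j * S j - T j * T j)
  <= gap j + dx j * dx j.
Proof.
move=> jK; have A0 := Aseq_ge0 lam_pos _ (ltnW jK); have a0 := aseq_pos lam_pos _ jK.
have to_yj := convex_gradient_le g_convex (g_grad (y j.+1)) (y j).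
have to_xs := convex_gradient_le g_convex (g_grad (y j.+1)) xs.
rewrite -/(v j) in to_yj to_xs; rewrite -/(a j) in a0.
have := estimate_identity (y j) (x j) (y j.+1) (v j) xs (xt j) (A := Aseq lam j)
  (Rgt_not_eq _ _ a0) ltac:(lra) (aseq_sqr lam_pos _ jK) (erefl _).
have sq_mul r : t j * r * (t j * r) = t j * t j * (r * r) by ring.
rewrite /gap /S /T !sq_mul !norm_sqr /t (_ : Aseq lam j.+1 = Aseq lam j + a j) // => identity.
have : 2 * Aseq lam j * (g (y j.+1) + inner (v j) (vsub (y j) (y j.+1)))
  <= 2 * Aseq lam j * g (y j) by apply: Rmult_le_compat_l; lra.
have : 2 * a j * (g (y j.+1) + inner (v j) (vsub xs (y j.+1))) <= 2 * a j * g xs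
  by apply: Rmult_le_compat_l; lra.
rewrite -/(u j) in identity; lra.
Qed.

Lemma framework_T_le j : (j < K)%nat -> T j <= sigma * S j + a j * delta.
Proof.
move=> jK; have [residual_le _] := proj2 (proj2 (proj2 framework)) j jK.
rewrite -/(v j) -/(xt j) in residual_le.
have a0 := aseq_pos lam_pos _ jK.
have t0 : 0 <= t j by apply: Rle_mult_inv_pos; [exact: (Aseq_ge0 lam_pos) | exact: a0].
have t_lam : t j * lam j.+1 = a j.
  rewrite /t /a; apply: (Rmult_eq_reg_r (aseq lam j.+1)); last lra.
  by rewrite (aseq_sqr lam_pos _ jK); field; lra.
have := Rmult_le_compat_l _ _ _ t0 residual_le.
have : t j * (lam j.+1 * delta) = a j * delta by rewrite -Rmult_assoc t_lam.
rewrite /T /S; lra.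
Qed.

Lemma framework_dx_succ_le j : (j < K)%nat -> dx j.+1 <= norm (vsub (u j) xs) + a j * delta.
Proof.
move=> jK; have [_ x_le] := proj2 (proj2 (proj2 framework)) j jK.
rewrite -/(a j) -/(v j) -/(u j) in x_le; rewrite /dx.
have -> : vsub (x j.+1) xs = vadd (vsub (u j) xs) (vsub (x j.+1) (u j)).
  by apply: functional_extensionality => i; rewrite /vadd /vsub; ring.
by have := norm_vadd_le (vsub (u j) xs) (vsub (x j.+1) (u j)); lra.
Qed.

Lemma framework_dy_succ_le j : (j < K)%nat ->
  dy j.+1 <= Aseq lam j / Aseq lam j.+1 * dy j + a j / Aseq lam j.+1 * (dx j + S j).
Proof.
move=> jK; have A0 := Aseq_ge0 lam_pos _ (ltnW jK); have a0 := aseq_pos lam_pos _ jK.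
exact (norm_sub_le_xtilde (y j) (x j) (y j.+1) xs (xt j) A0 a0 (erefl _)).
Qed.

Lemma bound_ge0 j : (j <= K)%nat -> 0 <= bound j.
Proof.
move=> jK; have := norm_ge0 xs; have := Aseq_ge0 lam_pos _ jK.
have : 0 <= (w + 1) * delta by apply: Rmult_le_pos; lra.
rewrite /bound; nra.
Qed.

Lemma bound_le j : (j <= K)%nat -> bound j <= 2 * norm xs.
Proof.
move=> jK; have : (w + 1) * Aseq lam j * delta <= (w + 1) * Aseq lam K * delta.
  by apply: Rmult_le_compat_r => //; apply: Rmult_le_compat_l; [lra | exact: Aseq_le].
rewrite /bound; lra.
Qed.

Lemma bound_succ j : bound j.+1 = bound j + (w + 1) * (a j * delta).
Proof. by rewrite /bound (_ : Aseq lam j.+1 = Aseq lam j + a j) //; ring. Qed.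

Lemma invariant_dx_le j : (j <= K)%nat ->
  gap j + dx j * dx j <= bound j * bound j -> dx j <= 2 * norm xs.
Proof.
move=> jK x_inv; apply: Rle_trans (bound_le _ jK); apply: sqr_le_sqr_inv.
  exact: bound_ge0.
have := Aseq_ge0 lam_pos _ jK; have := xs_min (y j); rewrite /gap in x_inv; nra.
Qed.

Lemma invariant_step j : (j < K)%nat -> invariant j -> invariant j.+1.
Proof.
move=> jK [x_inv y_inv].
have A0 := Aseq_ge0 lam_pos _ (ltnW jK); have a0 := aseq_pos lam_pos _ jK.
rewrite -/(a j) in a0.
have gap0 : 0 <= gap j.+1.
  by rewrite /gap; have := Aseq_ge0 lam_pos _ jK; have := xs_min (y j.+1); nra.
have T0 : 0 <= T j.
  apply: Rmult_le_pos; last exact: norm_ge0.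
  by apply: Rle_mult_inv_pos; [exact: (Aseq_ge0 lam_pos) | lra].
have [x_next S_le] := descent_step_real
  (conj (Rlt_le _ _ (proj1 sigma01)) (proj2 sigma01)) w_ge0 w_sqr
  (Rmult_le_pos _ _ (Rlt_le _ _ a0) delta_ge0) (bound_ge0 _ (ltnW jK)) gap0
  (norm_ge0 _) T0 (norm_ge0 _) (Rle_trans _ _ _ (framework_descent _ jK) x_inv)
  (framework_T_le _ jK) (framework_dx_succ_le _ jK).
rewrite -bound_succ in x_next S_le; split => //.
have dx_S_le : dx j + S j <= 4 * w * norm xs.
  have := invariant_dx_le _ (ltnW jK) x_inv.
  have : w * bound j.+1 <= w * (2 * norm xs).
    by apply: Rmult_le_compat_l => //; exact: bound_le.
  have : 1 * norm xs <= w * norm xs by apply: Rmult_le_compat_r; [exact: norm_ge0 | lra].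
  lra.
have Ap : Aseq lam j.+1 = Aseq lam j + a j by [].
have c1 : 0 <= Aseq lam j / Aseq lam j.+1 by apply: Rle_mult_inv_pos; lra.
have c2 : 0 <= a j / Aseq lam j.+1 by apply: Rle_mult_inv_pos; lra.
have := framework_dy_succ_le _ jK.
have := Rmult_le_compat_l _ _ _ c1 y_inv; have := Rmult_le_compat_l _ _ _ c2 dx_S_le.
have : Aseq lam j / Aseq lam j.+1 * (4 * w * norm xs) + a j / Aseq lam j.+1 * (4 * w * norm xs)
  = 4 * w * norm xs by rewrite Ap; field; lra.
lra.
Qed.

Lemma framework_invariant j : (j <= K)%nat -> invariant j.
Proof.
elim: j => [_ | j IHj jK]; last exact: invariant_step _ jK (IHj (ltnW jK)).
have [_ [x0 [y0 _]]] := framework; have X0 := norm_ge0 xs.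
rewrite /invariant /gap /dx /dy /bound x0 y0 !norm_zero_vsub /=; split; first nra.
have : 1 * norm xs <= 4 * w * norm xs by apply: Rmult_le_compat_r => //; lra.
lra.
Qed.

Lemma framework_bounds k theta : (k <= K)%nat -> 0 <= theta <= 1 ->
  norm (vsub (y k) xs) <= 4 * w * norm xs /\
  norm (vsub (vadd (vscale (1 - theta) (x k)) (vscale theta (y k))) xs) <= 4 * w * norm xs.
Proof.
move=> kK theta01; have [x_inv y_inv] := framework_invariant _ kK; split => //.
have dx_le : dx k <= 4 * w * norm xs.
  have := invariant_dx_le _ kK x_inv; have := norm_ge0 xs.
  have : 1 * norm xs <= w * norm xs by apply: Rmult_le_compat_r; [exact: norm_ge0 | lra].
  lra.
have -> : vsub (vadd (vscale (1 - theta) (x k)) (vscale theta (y k))) xs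
    = vadd (vscale (1 - theta) (vsub (x k) xs)) (vscale theta (vsub (y k) xs)).
  by apply: functional_extensionality => i; rewrite /vadd /vsub /vscale; ring.
have c1 : 0 <= 1 - theta by lra.
apply: Rle_trans (norm_vcomb_le _ _ _ _ c1 (proj1 theta01)) _.
have := Rmult_le_compat_l _ _ _ (proj1 theta01) y_inv.
have := Rmult_le_compat_l _ _ _ c1 dx_le.
rewrite /dx /dy; lra.
Qed.
End Framework.

Theorem mainTheorem14 (d : nat) (g : vec d -> R) (grad : vec d -> vec d)
  (sigma delta : R) (K : nat) (lam : nat -> R) (x y : nat -> vec d) (xs : vec d) :
  convex_fun g ->
  (forall z : vec d, has_gradient g z (grad z)) ->
  0 < sigma < 1 -> 0 <= delta -> (1 <= K)%nat ->
  generated_by_framework grad sigma delta K lam x y ->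
  is_minimizer g xs ->
  let mu := 4 * sqrt 2 / sqrt (1 - sigma) in
  delta <= norm xs / (mu * Aseq lam K) ->
  forall k : nat, (1 <= k <= K)%nat ->
  forall theta : R, 0 <= theta <= 1 ->
    norm (vsub (y k) xs) <= mu * norm xs /\
    norm (vsub (vadd (vscale (1 - theta) (x k)) (vscale theta (y k))) xs) <= mu * norm xs.
Proof.
move=> g_convex g_grad sigma01 delta0 _ framework xs_min mu delta_le k /andP[_ kK] theta theta01.
have s0 : 0 < sqrt (1 - sigma) by apply: sqrt_lt_R0; lra.
set w := / sqrt (1 - sigma).
have w0 : 0 <= w by exact/Rlt_le/Rinv_0_lt_compat.
have w_sqr : w * w * (1 - sigma) = 1.
  have ss : sqrt (1 - sigma) * sqrt (1 - sigma) = 1 - sigma by apply: sqrt_sqrt; lra.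
  by rewrite -{1}ss /w; field; lra.
have w1 := one_le_of_sqr_mul_eq1 (Rlt_le _ _ (proj1 sigma01)) w0 w_sqr.
have sqrt2 : 1 <= sqrt 2 by rewrite -sqrt_1; apply: sqrt_le_1_alt; lra.
have four_w_le : 4 * w <= mu by rewrite /mu /Rdiv -/w; nra.
have X0 := norm_ge0 xs; have A0 := Aseq_ge0 (proj1 framework) _ (leqnn K).
have budget : (w + 1) * Aseq lam K * delta <= norm xs.
  apply: Rle_trans _ (mul_le_of_le_div _ X0 delta_le); last by nra.
  by apply: Rmult_le_compat_r => //; apply: Rmult_le_compat_r => //; lra.
have := framework_bounds g_convex g_grad sigma01 delta0 w0 w_sqr framework xs_min budget
  _ _ kK theta01.
have : 4 * w * norm xs <= mu * norm xs by apply: Rmult_le_compat_r.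
lra.
Qed.
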